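(* Let $\mathcal G=(\mathcal V,\mathcal E)$ be an undirected simple graph, $k\ge1$, $d\ge2$, and let $v,w\in\mathcal V$ satisfy $\mathrm{dist}(v,w)=k$. Suppose the radius-$k$ neighborhood of $v$ is a $d$-regular tree, i.e. the subgraph induced on the vertices at distance at most $k$ from $v$ is a tree and every such vertex has degree $d$ in $\mathcal G$. Let $I^A_{v,k}(w)$ (resp. $I^B_{v,k}(w)$) denote the influence of $w$ on the $k$-th sequence element at $v$ for the adjacency extraction $\mathbf S^{(k)}=\tilde{\mathbf A}_{\mathcal G}^k\mathbf X$ (resp. the non-backtracking extraction $\mathbf S^{(k)}=\mathbf B_{\mathcal G}^{(k)}\mathbf X$). Then $$\frac{I^A_{v,k}(w)}{I^B_{v,k}(w)}=\left(\frac{d-1}{d}\right)^{k-1}.$$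
   Context: $\mathbf X\in\mathbb R^{n\times d'}$ are node features with rows $\mathbf x_u$; $\mathbf s_v^{(k)}$ is row $v$ of $\mathbf S^{(k)}$. $\mathbf A_{\mathcal G}$ is the adjacency matrix, $\mathbf D_{\mathcal G}$ the diagonal degree matrix, $\tilde{\mathbf A}_{\mathcal G}=\mathbf D_{\mathcal G}^{-1/2}\mathbf A_{\mathcal G}\mathbf D_{\mathcal G}^{-1/2}$. Non-backtracking matrices: $\mathbf B_{\mathcal G}^{(0)}=\mathbf I$, $\mathbf B_{\mathcal G}^{(1)}=\mathbf A_{\mathcal G}$, $\mathbf B_{\mathcal G}^{(2)}=\mathbf A_{\mathcal G}^2-\mathbf D_{\mathcal G}$, $\mathbf B_{\mathcal G}^{(t+2)}=\mathbf A_{\mathcal G}\mathbf B_{\mathcal G}^{(t+1)}-(\mathbf D_{\mathcal G}-\mathbf I)\mathbf B_{\mathcal G}^{(t)}$. Influence: $I_{v,k}(w)=\mathbf e^T\big[\partial\mathbf s_v^{(k)}/\partial\mathbf x_w\big]\mathbf e\,\big/\,\sum_{u\in\mathcal V}\mathbf e^T\big[\partial\mathbf s_v^{(k)}/\partial\mathbf x_u\big]\mathbf e$, with $\mathbf e$ the all-ones vector. *)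

From HB Require Import structures.
From mathcomp Require Import all_boot all_order all_algebra.
Set Implicit Arguments. Unset Strict Implicit. Unset Printing Implicit Defensive.
Import Order.TTheory GRing.Theory Num.Theory.
Local Open Scope ring_scope.

Section GraphDefs.
Variable R : rcfType.
Variable n : nat.
Variable e : rel 'I_n.

Definition simple_graph : Prop := symmetric e /\ irreflexive e.

Definition deg (u : 'I_n) : nat := #|[set x | e u x]|.

Fixpoint ball (k : nat) (v : 'I_n) : {set 'I_n} :=
  match k with
  | 0 => [set v]
  | k'.+1 => ball k' v :|: [set x | [exists y in ball k' v, e y x]]
  end.

Definition dist_eq (v w : 'I_n) (k : nat) : Prop :=
  w \in ball k v /\ forall j, (j < k)%N -> w \notin ball j v.

Definition induced_tree (S : {set 'I_n}) : Prop :=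
  (forall x y, x \in S -> y \in S ->
     exists p : seq 'I_n, [/\ path e x p, last x p = y & all (mem S) p])
  /\ ~ (exists c : seq 'I_n, [/\ (3 <= size c)%N, ucycle e c & all (mem S) c]).

Definition regular_tree_nbhd (v : 'I_n) (k d : nat) : Prop :=
  induced_tree (ball k v) /\ forall u, u \in ball k v -> deg u = d.

Definition adj_mx : 'M[R]_n := \matrix_(i, j) (e i j)%:R.
Definition deg_mx : 'M[R]_n := \matrix_(i, j) ((deg i)%:R *+ (i == j)).
Definition deg_isqrt_mx : 'M[R]_n :=
  \matrix_(i, j) ((Num.sqrt (deg i)%:R)^-1 *+ (i == j)).
Definition norm_adj_mx : 'M[R]_n := deg_isqrt_mx *m adj_mx *m deg_isqrt_mx.

Definition mxpow (M : 'M[R]_n) (k : nat) : 'M[R]_n :=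
  iter k (fun B => M *m B) 1%:M.

Fixpoint nb_mx (t : nat) : 'M[R]_n :=
  match t with
  | 0 => 1%:M
  | 1 => adj_mx
  | 2 => adj_mx *m adj_mx - deg_mx
  | (((t1.+1) as t2).+1) => adj_mx *m nb_mx t2 - (deg_mx - 1%:M) *m nb_mx t1
  end.
End GraphDefs.

Section Influence.
Variable R : rcfType.
Variables n d' : nat.

(* Jacobian d F / d x_u of a LINEAR map F : R^{n x d'} -> R^{d'} (row vectors);
   for linear maps the partial derivative in direction delta_mx u j is F (delta_mx u j).
   Entry (i, j) = d F_i / d X_{u j}. *)
Definition lin_jac (F : 'M[R]_(n, d') -> 'rV[R]_d') (u : 'I_n) : 'M[R]_d' :=
  \matrix_(i, j) F (delta_mx u j) 0 i.

Definition eJe (J : 'M[R]_d') : R :=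
  ((const_mx 1 : 'rV[R]_d') *m J *m (const_mx 1 : 'cV[R]_d')) 0 0.

Definition extract (M : 'M[R]_n) (v : 'I_n) (X : 'M[R]_(n, d')) : 'rV[R]_d' :=
  row v (M *m X).

Definition influence (M : 'M[R]_n) (v w : 'I_n) : R :=
  eJe (lin_jac (extract M v) w) / \sum_(u < n) eJe (lin_jac (extract M v) u).
End Influence.

From HB Require Import structures.
From mathcomp Require Import all_boot all_order all_algebra.
From mathcomp Require Import ring.
Set Implicit Arguments. Unset Strict Implicit. Unset Printing Implicit Defensive.
Import Order.TTheory GRing.Theory Num.Theory.

(* Both extractions are linear, so the influence of w is the (v, w) entry of the
   propagation matrix divided by its v-th row sum.  Inside the d-regular tree
   around v every vertex at distance t + 1 <= k has exactly one neighbour at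
   distance t (two of them would close a cycle through two geodesics), so the
   (v, w) entry only collects the geodesic from v: it is d^-k for A~^k and 1 for
   B^(k).  The rows of A~ sum to 1 inside the ball, so A~^k has row sum 1,
   whereas the row sums S_t of B^(t) satisfy S_1 = d and S_(t+1) = (d - 1) S_t,
   which counts the non-backtracking walks. *)

Section Balls.
Variables (n : nat) (e : rel 'I_n) (v : 'I_n).

Lemma mem_ball_le i j x : (i <= j)%N -> x \in ball e i v -> x \in ball e j v.
Proof.
move=> /subnK <- xi; elim: (j - i)%N => [//|m IHm].
by rewrite addSn /= inE IHm.
Qed.

Lemma ball_step j x y : x \in ball e j v -> e x y -> y \in ball e j.+1 v.
Proof.
by move=> xj exy; rewrite !inE; apply/orP; right; apply/existsP; exists x; rewrite xj.
Qed.

Lemma dist_eq_ball j x : dist_eq e v x j -> x \in ball e j v.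
Proof. by case. Qed.

Lemma dist_eq_notin j x : dist_eq e v x j.+1 -> x \notin ball e j v.
Proof. by case=> _; apply. Qed.

Lemma dist_eq0 x : dist_eq e v x 0 -> x = v.
Proof. by case; rewrite inE => /eqP. Qed.

Lemma dist_eq_neighbor j x y :
  dist_eq e v x j.+1 -> e y x -> y \in ball e j v -> dist_eq e v y j.
Proof.
move=> [_ xfar] eyx yj; split=> // i ij; apply/negP=> yi.
by move: (xfar i.+1 ij); rewrite (ball_step yi eyx).
Qed.

Lemma dist_eq_parent j x : dist_eq e v x j.+1 -> exists2 y, dist_eq e v y j & e y x.
Proof.
move=> hx; have := dist_eq_ball hx; rewrite /= inE (negbTE (dist_eq_notin hx)) inE.
by case/existsP=> y /andP [yj eyx]; exists y; first exact: dist_eq_neighbor hx eyx yj.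
Qed.

Hypothesis e_sym : symmetric e.

Lemma equidistant_upath j a b : dist_eq e v a j -> dist_eq e v b j ->
  exists p, [/\ path e a p, last a p = b, uniq (a :: p) & all (mem (ball e j v)) p].
Proof.
elim: j a b => [|j IHj] a b ha hb.
  by exists [::]; rewrite (dist_eq0 ha) (dist_eq0 hb).
have [<-|ab] := eqVneq a b; first by exists [::].
have [pa hpa epa] := dist_eq_parent ha; have [pb hpb epb] := dist_eq_parent hb.
have [p [pth lst up sub]] := IHj pa pb hpa hpb.
have sub' : all (mem (ball e j v)) (pa :: p) by rewrite /= (dist_eq_ball hpa).
have far x : x \notin ball e j v -> x \notin pa :: p by apply: contra => /(allP sub').
exists (rcons (pa :: p) b); split.
- by rewrite rcons_path /= pth lst e_sym epa.
- by rewrite last_rcons.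
- rewrite cons_uniq mem_rcons in_cons rcons_uniq negb_or ab up.
  by rewrite !far ?(dist_eq_notin ha) ?(dist_eq_notin hb).
- rewrite all_rcons; apply/andP; split; first exact: dist_eq_ball hb.
  by apply: sub_all sub' => x; apply: mem_ball_le.
Qed.

Variable k : nat.
Hypothesis ball_acyclic :
  ~ (exists c : seq 'I_n, [/\ (3 <= size c)%N, ucycle e c & all (mem (ball e k v)) c]).

Lemma tree_parent_uniq j u a b : (j < k)%N -> dist_eq e v u j.+1 ->
  e a u -> e b u -> a \in ball e j v -> b \in ball e j v -> a = b.
Proof.
move=> jk hu eau ebu aj bj; have [//|ab] := eqVneq a b; case: ball_acyclic.
have [p [pth lst up sub]] :=
  equidistant_upath (dist_eq_neighbor hu eau aj) (dist_eq_neighbor hu ebu bj).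
have sub' : all (mem (ball e j v)) (a :: p) by rewrite /= aj.
exists (u :: a :: p); split.
- by case: p lst {pth up sub sub'} => // /= ba; rewrite ba eqxx in ab.
- apply/andP; split; first by rewrite /= rcons_path pth lst e_sym eau ebu.
  by rewrite cons_uniq up andbT; apply: contra (dist_eq_notin hu) => /(allP sub').
- apply/andP; split; first exact: mem_ball_le jk (dist_eq_ball hu).
  by apply: sub_all sub' => x; apply: mem_ball_le (ltnW jk).
Qed.

End Balls.

Local Open Scope ring_scope.

Lemma subrACA (V : zmodType) (x y z w : V) : x - y - (z - w) = x - z - (y - w).
Proof. by rewrite !opprB addrACA [RHS]addrACA [- y + _]addrC. Qed.

Lemma recurrence_mulr_flip (Rg : pzRingType) (a b : Rg) (x : nat -> Rg) :
    x 0 = 1 -> x 1 = a -> x 2 = a * a - b ->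
    (forall t, x t.+3 = a * x t.+2 - (b - 1) * x t.+1) ->
  forall t, x t.+3 = x t.+2 * a - x t.+1 * (b - 1).
Proof.
move=> x0 x1 x2; move cE : (b - 1) => c xS.
suff flip t : x t.+3 = x t.+2 * a - x t.+1 * c /\ x t.+4 = x t.+3 * a - x t.+2 * c.
  by move=> t; case: (flip t).
elim: t => [|t [IH0 IH1]]; last first.
  (* Expand a x_(t+4) and x_(t+4) a by opposite recurrences: both sides become
     a x a - a x c - c x a + c x c, with the two middle terms swapped. *)
  split=> //; rewrite xS [in LHS]IH0 [in LHS]IH1 [in RHS](xS t) [in RHS](xS t.+1).
  by rewrite !(mulrBr, mulrBl) !mulrA subrACA.
have x3 : x 3 = x 2 * a - x 1 * c.
  by rewrite xS x2 x1 -cE !(mulrBr, mulrBl) !mulrA mulr1 mul1r subrACA.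
have bc : b * c = c * b by rewrite -cE mulrBr mulrBl mulr1 mul1r.
have x2l : x 2 = a * x 1 - b * x 0 by rewrite x2 x1 x0 mulr1.
have x2r : x 2 = x 1 * a - x 0 * b by rewrite x2 x1 x0 mul1r.
split=> //; rewrite xS [in LHS]x2r [in LHS]x3 [in RHS]x2l [in RHS](xS 0).
by rewrite x0 !(mulrBr, mulrBl) !mulrA !mulr1 bc subrACA.
Qed.

Lemma sum_row_mulmx (R : pzSemiRingType) m p q
    (X : 'M[R]_(m, p)) (M : 'M[R]_(p, q)) (S : {set 'I_p}) (c : R) i :
  (forall x, x \notin S -> X i x = 0) -> (forall x, x \in S -> \sum_u M x u = c) ->
  \sum_u (X *m M) i u = (\sum_x X i x) * c.
Proof.
move=> X0 Mc; under eq_bigr do rewrite mxE.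
rewrite exchange_big mulr_suml; apply: eq_bigr => x _; rewrite -mulr_sumr.
by have [/Mc ->|/X0 ->] := boolP (x \in S); rewrite ?mul0r.
Qed.

Lemma sum_row_diag_mx (R : pzSemiRingType) m (r : 'rV[R]_m) i :
  \sum_j diag_mx r i j = r 0 i.
Proof.
rewrite (bigD1 i) //= big1 ?addr0 => [|j ji]; first by rewrite mxE eqxx.
by rewrite mxE eq_sym (negbTE ji).
Qed.

Lemma sum_row_scalar_mx (R : pzSemiRingType) m (a : R) (i : 'I_m) :
  \sum_j (a%:M : 'M_m) i j = a.
Proof. by rewrite -diag_const_mx sum_row_diag_mx mxE. Qed.

Lemma submxE (R : zmodType) m p (X Y : 'M[R]_(m, p)) i j :
  (X - Y) i j = X i j - Y i j.
Proof. by rewrite !mxE. Qed.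

Lemma mxpowS (R : rcfType) n (M : 'M[R]_n) t : mxpow M t.+1 = mxpow M t *m M.
Proof.
have mxpowSl s : mxpow M s.+1 = M *m mxpow M s by [].
elim: t => [|t IHt]; first by rewrite /mxpow /= mulmx1 mul1mx.
by rewrite mxpowSl {1}IHt mulmxA.
Qed.

Section Influence.
Variables (R : rcfType) (n d' : nat).
Hypothesis d'_gt0 : (0 < d')%N.

Lemma lin_jac_extract (M : 'M[R]_n) v u :
  lin_jac (@extract R n d' M v) u = (M v u)%:M.
Proof.
apply/matrixP => i j; rewrite !mxE (bigD1 u) //= big1 ?addr0 => [|x xu].
  by rewrite !mxE eqxx /= mulr_natr.
by rewrite !mxE (negbTE xu) mulr0.
Qed.

Lemma eJe_scalar (a : R) : eJe (a%:M : 'M_d') = a *+ d'.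
Proof.
rewrite /eJe mul_mx_scalar -scalemxAl mxE mxE.
under eq_bigr do rewrite !mxE mulr1.
by rewrite sumr_const card_ord mulr_natr.
Qed.

Lemma influence_extractE (M : 'M[R]_n) v w :
  influence d' M v w = M v w / \sum_u M v u.
Proof.
rewrite /influence lin_jac_extract eJe_scalar.
under eq_bigr do rewrite lin_jac_extract eJe_scalar.
rewrite sumrMnl -(mulr_natr (M v w)) -(mulr_natr (\sum_u M v u)).
rewrite invfM mulrACA divff ?mulr1 //.
by rewrite pnatr_eq0 -lt0n.
Qed.

End Influence.

Section GraphMatrices.
Variables (R : rcfType) (n : nat) (e : rel 'I_n) (v : 'I_n).
Local Notation A := (adj_mx R e).
Local Notation D := (deg_mx R e).
Local Notation nb := (nb_mx R e).

Definition edge_supported (M : 'M[R]_n) := forall x u, ~~ e x u -> M x u = 0.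

Definition ball_supported t (X : 'M[R]_n) := forall u, u \notin ball e t v -> X v u = 0.

Lemma ball_supported_mulmx t X M :
  ball_supported t X -> edge_supported M -> ball_supported t.+1 (X *m M).
Proof.
move=> X0 M0 u ut; rewrite mxE big1 // => x _.
have [xt|/X0 ->] := boolP (x \in ball e t v); last by rewrite mul0r.
by rewrite M0 ?mulr0 //; apply: contra ut; apply: ball_step.
Qed.

Lemma adj_edge_supported : edge_supported A.
Proof. by move=> x u /negbTE exu; rewrite mxE exu. Qed.

Lemma sum_adj_row x : \sum_u A x u = (deg e x)%:R.
Proof.
rewrite /deg -sum1_card natr_sum [RHS]big_mkcond.
by apply: eq_bigr => u _; rewrite !mxE inE; case: (e x u).
Qed.

Definition isqrt_deg x : R := (Num.sqrt (deg e x)%:R)^-1.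

Lemma norm_adj_mxE x u :
  norm_adj_mx R e x u = isqrt_deg x * (e x u)%:R * isqrt_deg u.
Proof.
rewrite /norm_adj_mx (_ : deg_isqrt_mx R e = diag_mx (\row_i isqrt_deg i)).
  by rewrite mul_diag_mx mul_mx_diag !mxE.
by apply/matrixP => i j; rewrite !mxE.
Qed.

Lemma norm_adj_edge_supported : edge_supported (norm_adj_mx R e).
Proof. by move=> x u /negbTE exu; rewrite norm_adj_mxE exu mulr0 mul0r. Qed.

Lemma deg_sub_scalar_mx c : D - c%:M = diag_mx (\row_i ((deg e i)%:R - c)).
Proof. by apply/matrixP => i j; rewrite !mxE mulrnBl. Qed.

Lemma mulmx_deg_subE (X : 'M[R]_n) (c : R) i u :
  (X *m (D - c%:M)) i u = X i u * ((deg e u)%:R - c).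
Proof. by rewrite deg_sub_scalar_mx mul_mx_diag !mxE. Qed.

(* [nb_mx] multiplies by the adjacency matrix on the left, while the row of [v]
   is propagated by multiplication on the right. *)
Lemma nb_mx_mulmx t : nb t.+2 = nb t.+1 *m A - nb t *m (D - (0 < t)%:R%:M).
Proof.
case: t => [|t]; first by rewrite /= raddf0 subr0 mul1mx.
exact: (recurrence_mulr_flip (x := nb) erefl erefl erefl (fun _ => erefl)).
Qed.

End GraphMatrices.

Section RegularTree.
Variables (R : rcfType) (n : nat) (e : rel 'I_n) (v : 'I_n) (k d : nat).
Hypothesis e_sym : symmetric e.
Hypothesis ball_acyclic :
  ~ (exists c : seq 'I_n, [/\ (3 <= size c)%N, ucycle e c & all (mem (ball e k v)) c]).
Hypothesis deg_ball : forall u, u \in ball e k v -> deg e u = d.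
Hypothesis d_gt0 : (0 < d)%N.
Local Notation N := (norm_adj_mx R e).
Local Notation A := (adj_mx R e).
Local Notation nb := (nb_mx R e).

Lemma mulmx_tree_parent t (X M : 'M[R]_n) u p : (t < k)%N ->
    ball_supported e v t X -> edge_supported e M ->
    dist_eq e v u t.+1 -> p \in ball e t v -> e p u ->
  (X *m M) v u = X v p * M p u.
Proof.
move=> tk X0 M0 hu pt epu; rewrite mxE (bigD1 p) //= big1 ?addr0 // => x xp.
have [xt|/X0 ->] := boolP (x \in ball e t v); last by rewrite mul0r.
have [exu|/M0 ->] := boolP (e x u); last by rewrite mulr0.
by case/eqP: xp; apply: (tree_parent_uniq e_sym ball_acyclic tk hu).
Qed.

Lemma norm_adj_mx_ball x u : x \in ball e k v -> u \in ball e k v -> e x u ->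
  N x u = d%:R^-1.
Proof.
move=> xk uk exu; rewrite norm_adj_mxE exu mulr1 /isqrt_deg !deg_ball //.
by rewrite -invfM -expr2 sqr_sqrtr ?ler0n.
Qed.

Lemma sum_norm_adj_row t x : (t < k)%N -> x \in ball e t v -> \sum_u N x u = 1.
Proof.
move=> tk xt; have xk := mem_ball_le (ltnW tk) xt.
transitivity (\sum_u A x u * d%:R^-1).
  apply: eq_bigr => u _; have [exu|nexu] := boolP (e x u).
    by rewrite norm_adj_mx_ball ?mxE ?exu ?mul1r // (mem_ball_le tk (ball_step xt exu)).
  by rewrite norm_adj_edge_supported // adj_edge_supported // mul0r.
by rewrite -mulr_suml sum_adj_row deg_ball // divff // pnatr_eq0 -lt0n.
Qed.

Lemma mxpow_norm_adj_supported t : ball_supported e v t (mxpow N t).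
Proof.
elim: t => [|t IHt] u.
  by rewrite inE eq_sym => /negbTE uv; rewrite mxE uv.
by rewrite mxpowS; apply: ball_supported_mulmx IHt (@norm_adj_edge_supported _ _ _) u.
Qed.

Lemma sum_mxpow_norm_adj t : (t <= k)%N -> \sum_u mxpow N t v u = 1.
Proof.
elim: t => [_|t IHt tk]; first exact: sum_row_scalar_mx.
rewrite mxpowS (@sum_row_mulmx _ _ _ _ _ _ (ball e t v) 1) ?IHt ?mulr1 ?(ltnW tk) //.
  exact: mxpow_norm_adj_supported.
by move=> x; apply: sum_norm_adj_row.
Qed.

Lemma mxpow_norm_adj_dist t u : (t <= k)%N -> dist_eq e v u t ->
  mxpow N t v u = d%:R ^- t.
Proof.
elim: t u => [|t IHt] u tk hu; first by rewrite (dist_eq0 hu) mxE eqxx expr0 invr1.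
have [p hp epu] := dist_eq_parent hu; have pt := dist_eq_ball hp.
rewrite mxpowS (mulmx_tree_parent tk (@mxpow_norm_adj_supported t)
  (@norm_adj_edge_supported _ _ _) hu pt epu).
rewrite IHt ?(ltnW tk) // norm_adj_mx_ball ?exprSr ?invfM //.
  exact: mem_ball_le (ltnW tk) pt.
exact: mem_ball_le tk (dist_eq_ball hu).
Qed.

Lemma nb_mx_supported t : ball_supported e v t (nb t).
Proof.
suff sup2 : ball_supported e v t (nb t) /\ ball_supported e v t.+1 (nb t.+1).
  by case: sup2.
elim: t => [|t [IH0 IH1]].
  have nb0 : ball_supported e v 0 (nb 0).
    by move=> u; rewrite inE eq_sym => /negbTE uv; rewrite mxE uv.
  split=> //; rewrite -[nb 1]mul1mx.
  exact: ball_supported_mulmx nb0 (@adj_edge_supported _ _ _).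
split=> // u ut; rewrite nb_mx_mulmx submxE mulmx_deg_subE.
rewrite (ball_supported_mulmx IH1 (@adj_edge_supported _ _ _)) // IH0 ?mul0r ?subr0 //.
by apply: contra ut; apply: mem_ball_le; rewrite ltnW.
Qed.

Lemma nb_mx_dist t u : (t <= k)%N -> dist_eq e v u t -> nb t v u = 1.
Proof.
elim: t u => [|t IHt] u tk hu; first by rewrite (dist_eq0 hu) mxE eqxx.
have [p hp epu] := dist_eq_parent hu.
case: t IHt tk hu hp => [|t] IHt tk hu hp; first by rewrite /= mxE -(dist_eq0 hp) epu.
have ut : u \notin ball e t v := hu.2 t (leqnSn _).
rewrite nb_mx_mulmx submxE mulmx_deg_subE (nb_mx_supported ut) mul0r subr0.
rewrite (mulmx_tree_parent tk (@nb_mx_supported t.+1) (@adj_edge_supported _ _ _) hu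
  (dist_eq_ball hp) epu).
by rewrite IHt ?(ltnW tk) // mxE epu mulr1.
Qed.

Lemma sum_nb_mx1 : \sum_u nb 1 v u = d%:R.
Proof. by rewrite sum_adj_row deg_ball // (mem_ball_le (leq0n k)) ?inE. Qed.

Lemma sum_nb_mx_rec t : (t.+2 <= k)%N -> \sum_u nb t.+2 v u =
  (\sum_u nb t.+1 v u) * d%:R - (\sum_u nb t v u) * (d%:R - (0 < t)%:R).
Proof.
move=> tk; rewrite nb_mx_mulmx; under eq_bigr do rewrite submxE.
rewrite sumrB (@sum_row_mulmx _ _ _ _ _ _ (ball e t.+1 v) d%:R).
rewrite (@sum_row_mulmx _ _ _ _ _ _ (ball e t v) (d%:R - (0 < t)%:R)) //.
- exact: nb_mx_supported.
- move=> x xt; rewrite deg_sub_scalar_mx sum_row_diag_mx mxE deg_ball //.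
  exact: mem_ball_le (leq_trans (leqnSn t) (ltnW tk)) xt.
- exact: nb_mx_supported.
- by move=> x xt; rewrite sum_adj_row deg_ball // (mem_ball_le (ltnW tk)).
Qed.

Lemma sum_nb_mxS t : (t.+2 <= k)%N ->
  \sum_u nb t.+2 v u = (d%:R - 1) * \sum_u nb t.+1 v u.
Proof.
elim: t => [|t IHt] tk; rewrite sum_nb_mx_rec //.
  by rewrite sum_row_scalar_mx sum_nb_mx1 /=; ring.
by rewrite IHt ?(ltnW tk) //=; ring.
Qed.

Lemma sum_nb_mx t : (t < k)%N -> \sum_u nb t.+1 v u = d%:R * (d%:R - 1) ^+ t.
Proof.
elim: t => [|t IHt] tk; first by rewrite expr0 mulr1 sum_nb_mx1.
by rewrite sum_nb_mxS // IHt ?(ltnW tk) // exprS mulrCA.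
Qed.

End RegularTree.

Theorem lemmaG2 (R : rcfType) (n d' : nat) (e : rel 'I_n)
  (k d : nat) (v w : 'I_n) :
  simple_graph e -> (0 < d')%N -> (1 <= k)%N -> (2 <= d)%N ->
  dist_eq e v w k ->
  regular_tree_nbhd e v k d ->
  influence d' (mxpow (norm_adj_mx R e) k) v w
    / influence d' (nb_mx R e k) v w
  = ((d%:R - 1) / d%:R) ^+ (k - 1).
Proof.
move=> [e_sym _] d'_gt0 k_gt0 d_ge2 hw [[_ acyclic] deg_ball].
have d_gt0 : (0 < d)%N by apply: leq_trans d_ge2.
rewrite !influence_extractE // (mxpow_norm_adj_dist R e_sym acyclic deg_ball) //.
rewrite (sum_mxpow_norm_adj R deg_ball d_gt0) //.
rewrite (nb_mx_dist R e_sym acyclic) //.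
case: k k_gt0 => // k _ in hw acyclic deg_ball *.
rewrite (sum_nb_mx R deg_ball) // subn1 /= divr1 div1r invrK.
rewrite exprS exprMn exprVn invfM mulrACA mulVf ?mul1r 1?mulrC //.
by rewrite pnatr_eq0 -lt0n.
Qed.
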